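(* Let $R$ be a commutative noetherian ring, let $\mathfrak a$ be an ideal of $R$, let $\mathcal S_1$ be a Serre subcategory of $R$-modules and let $\mathcal S_2$ be any subcategory of $R$-modules containing the zero module. If $\mathcal S_1\mathcal S_2$ is closed under extensions and $(\mathcal S_2\mathcal S_1)_{\mathfrak a}$ is closed under quotients, then $(\mathcal S_2\mathcal S_1)_{\mathfrak a}\subseteq(\mathcal S_1\mathcal S_2)_{\mathfrak a}$. In particular, if $\mathcal S_2\mathcal S_1$ satisfies the condition $C_{\mathfrak a}$, then so does $\mathcal S_1\mathcal S_2$.
   Context: A Serre subcategory is a full subcategory of $R$-modules closed under submodules, quotients and extensions. For subcategories $\mathcal S,\mathcal T$, the extension subcategory $\mathcal S\mathcal T$ consists of all modules $M$ admitting an exact sequence $0\to L\to M\to N\to 0$ with $L\in\mathcal S$, $N\in\mathcal T$; $\mathcal S$ is closed under extensions if $\mathcal S\mathcal S=\mathcal S$. For a subcategory $\mathcal S$ and module $M$, $\mathcal S$ satisfies the condition $C_{\mathfrak a}$ on $M$ if: $\Gamma_{\mathfrak a}(M)=M$ and $(0:_M\mathfrak a)\in\mathcal S$ imply $M\in\mathcal S$. $\mathcal S_{\mathfrak a}$ denotes the largest subcategory of modules on all of whose objects $\mathcal S$ satisfies the condition $C_{\mathfrak a}$ (i.e. the class of all modules $M$ on which $\mathcal S$ satisfies $C_{\mathfrak a}$). $\mathcal S$ satisfies the condition $C_{\mathfrak a}$ if $\mathcal S_{\mathfrak a}$ is the whole category of $R$-modules. *)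

From HB Require Import structures.
From mathcomp Require Import all_boot all_algebra.
Set Implicit Arguments. Unset Strict Implicit. Unset Printing Implicit Defensive.
Import GRing.Theory.
Local Open Scope ring_scope.

(* R-modules are modeled as [lmodType R] for a commutative ring R.
   A "subcategory" of R-modules is a predicate on modules. *)
Definition modclass (R : comPzRingType) := lmodType R -> Prop.

Section Defs.
Variable R : comPzRingType.

Definition is_ideal (a : R -> Prop) : Prop :=
  [/\ a 0, (forall x y, a x -> a y -> a (x + y)) & (forall r x, a x -> a (r * x))].

Definition noetherian_ring : Prop :=
  forall I : nat -> R -> Prop, (forall n, is_ideal (I n)) ->
    (forall n x, I n x -> I n.+1 x) ->
    exists N, forall n, (N <= n)%N -> forall x, I n x -> I N x.

(* closed under isomorphisms (standing convention for subcategories) *)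
Definition iso_closed (S : modclass R) : Prop :=
  forall (M N : lmodType R) (f : {linear M -> N}), bijective f -> S M -> S N.

Definition closed_sub (S : modclass R) : Prop :=
  forall (M N : lmodType R) (f : {linear N -> M}), injective f -> S M -> S N.

Definition closed_quot (S : modclass R) : Prop :=
  forall (M N : lmodType R) (f : {linear M -> N}), (forall y, exists x, f x = y) -> S M -> S N.

Definition short_exact (L M N : lmodType R) (f : {linear L -> M}) (g : {linear M -> N}) : Prop :=
  [/\ injective f, (forall n, exists m, g m = n) & forall m, g m = 0 <-> exists l, f l = m].

Definition ext_class (S T : modclass R) : modclass R := fun M =>
  exists (L N : lmodType R) (f : {linear L -> M}) (g : {linear M -> N}),
    [/\ short_exact f g, S L & T N].

Definition ext_closed (S : modclass R) : Prop :=
  forall M, ext_class S S M <-> S M.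

Definition serre (S : modclass R) : Prop :=
  [/\ closed_sub S, closed_quot S & ext_closed S].

Definition contains_zero (S : modclass R) : Prop :=
  exists Z : lmodType R, (forall z : Z, z = 0) /\ S Z.

Definition ann_pow (a : R -> Prop) (M : lmodType R) (n : nat) (m : M) : Prop :=
  forall s : n.-tuple R, (forall x, x \in s -> a x) -> (\prod_(x <- s) x) *: m = 0.

Definition a_torsion (a : R -> Prop) (M : lmodType R) : Prop :=
  forall m : M, exists n, ann_pow a n m.

(* (0 :_M a) belongs to S: it is (the image of) a module in S via an
   injective linear map onto the submodule {m | a m = 0}. *)
Definition socle_in (a : R -> Prop) (S : modclass R) (M : lmodType R) : Prop :=
  exists (N : lmodType R) (i : {linear N -> M}),
    [/\ injective i, (forall m, (exists n, i n = m) <-> (forall x, a x -> x *: m = 0)) & S N].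

Definition Ca_class (a : R -> Prop) (S : modclass R) : modclass R := fun M =>
  a_torsion a M -> socle_in a S M -> S M.

Definition satisfies_Ca (a : R -> Prop) (S : modclass R) : Prop :=
  forall M, Ca_class a S M.
End Defs.

(* Let [M] be [a]-torsion and let [(0 :_M a)] have a submodule [L] in [S1] with quotient [N]
   in [S2].  Then [M / L] lies in [(S2 S1)_a], being a quotient of [M], and is [a]-torsion.
   Its [a]-socle [(L :_M a) / L] has the submodule [(0 :_M a) / L], isomorphic to [N], with
   quotient [(L :_M a) / (0 :_M a)]; if [g_1, ..., g_n] generate [a] ([R] is noetherian), the
   map [m |-> (g_k m)_k] embeds the latter into [L^n], which lies in [S1].  So [M / L] lies in
   [S2 S1], hence in [S1 S2], and [M], with submodule [L] and quotient [M / L], lies in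
   [S1 (S1 S2)], hence in [S1 S2] since the latter is closed under extensions. *)

From HB Require Import structures.
From mathcomp Require Import all_boot all_algebra.
From mathcomp Require Import boolp.
Set Implicit Arguments. Unset Strict Implicit. Unset Printing Implicit Defensive.
Import GRing.Theory.
Local Open Scope ring_scope.

Section Submodule.
Variables (R : comPzRingType) (V : lmodType R).

Definition submod (P : V -> Prop) : Prop :=
  P 0 /\ forall r x y, P x -> P y -> P (r *: x + y).

Variables (P : V -> Prop) (P_sub : submod P).

Lemma submod0 : P 0. Proof. by case: P_sub. Qed.

Lemma submodD x y : P x -> P y -> P (x + y).
Proof. by move=> Px Py; have := P_sub.2 1 x y Px Py; rewrite scale1r. Qed.

Lemma submodZ r x : P x -> P (r *: x).
Proof. by move=> Px; have := P_sub.2 r x 0 Px submod0; rewrite addr0. Qed.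

Lemma submodN x : P x -> P (- x).
Proof. by rewrite -scaleN1r; apply: submodZ. Qed.

End Submodule.

Section Subquotient.
Variables (R : comPzRingType) (V : lmodType R) (U W : V -> Prop).

Definition subquot_spec : Prop := [/\ submod U, submod W & forall x, W x -> U x].

Definition modrepr (v : V) : V := choose (fun u => `[< W (u - v) >]) v.

(* [U / W] is encoded by the canonical representatives of the classes of elements of [U]. *)
Definition subquot of subquot_spec := {v : V | `[< U v >] && (modrepr v == v)}.

Hypothesis UW : subquot_spec.
Local Notation Q := (subquot UW).
HB.instance Definition _ := Choice.copy Q {v : V | `[< U v >] && (modrepr v == v)}.

Let U_sub : submod U. Proof. by case: UW. Qed.
Let W_sub : submod W. Proof. by case: UW. Qed.
Let WU x : W x -> U x. Proof. by case: UW => _ _; apply. Qed.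

Lemma eqmod_refl x : W (x - x). Proof. by rewrite subrr; apply: submod0 W_sub. Qed.

Lemma eqmod_sym x y : W (x - y) -> W (y - x).
Proof. by move=> Wxy; rewrite -opprB; apply: submodN W_sub _ Wxy. Qed.

Lemma eqmod_trans y x z : W (x - y) -> W (y - z) -> W (x - z).
Proof. by move=> Wxy Wyz; have := submodD W_sub Wxy Wyz; rewrite addrA subrK. Qed.

Lemma eqmodD x x' y y' : W (x - x') -> W (y - y') -> W (x + y - (x' + y')).
Proof. by move=> Wx Wy; rewrite opprD addrACA; apply: submodD W_sub _ _ Wx Wy. Qed.

Lemma eqmodZ r x x' : W (x - x') -> W (r *: x - r *: x').
Proof. by move=> Wx; rewrite -scalerBr; apply: submodZ W_sub _ _ Wx. Qed.

Lemma eqmodN x x' : W (x - x') -> W (- x - - x').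
Proof. by move=> Wx; rewrite -opprD; apply: submodN W_sub _ Wx. Qed.

Lemma modrepr_eqmod v : W (modrepr v - v).
Proof.
apply/asboolP; apply: (@chooseP _ (fun u => `[< W (u - v) >])).
by apply/asboolP; apply: eqmod_refl.
Qed.

Lemma modrepr_eq x y : W (x - y) -> modrepr x = modrepr y.
Proof.
move=> Wxy; rewrite /modrepr (@eq_choose _ _ (fun u => `[< W (u - y) >])).
  by apply: choose_id; apply/asboolP => //; apply: eqmod_refl.
move=> u; apply/asboolP/asboolP => [Wux|Wuy]; first exact: eqmod_trans Wux Wxy.
exact: eqmod_trans Wuy (eqmod_sym Wxy).
Qed.

Lemma U_modrepr x : U x -> U (modrepr x).
Proof.
by move=> Ux; rewrite -(subrK x (modrepr x)); apply: submodD => //; apply/WU/modrepr_eqmod.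
Qed.

Definition restrict_in (v : V) : V := if `[< U v >] then v else 0.

Lemma U_restrict_in v : U (restrict_in v).
Proof. by rewrite /restrict_in; case: asboolP => // _; apply: submod0. Qed.

Lemma restrict_inE v : U v -> restrict_in v = v.
Proof. by rewrite /restrict_in; case: asboolP. Qed.

Lemma sqpi_subproof v : let w := modrepr (restrict_in v) in `[< U w >] && (modrepr w == w).
Proof.
apply/andP; split; first by apply/asboolP/U_modrepr/U_restrict_in.
by apply/eqP/modrepr_eq/modrepr_eqmod.
Qed.

Definition sqpi (v : V) : Q :=
  @exist _ (fun w => `[< U w >] && (modrepr w == w)) _ (sqpi_subproof v).

Lemma U_val (q : Q) : U (val q).
Proof. by case: q => v /= /andP[/asboolP]. Qed.

Lemma sqpi_val : cancel val sqpi.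
Proof.
case=> v vP; apply: val_inj => /=.
by case/andP: (vP) => /asboolP Uv /eqP cv; rewrite restrict_inE.
Qed.

Lemma val_sqpi_eqmod x : U x -> W (val (sqpi x) - x).
Proof. by move=> Ux; rewrite /= restrict_inE //; apply: modrepr_eqmod. Qed.

Lemma sqpi_eq x y : U x -> U y -> sqpi x = sqpi y <-> W (x - y).
Proof.
move=> Ux Uy; split => [exy|Wxy].
  apply: eqmod_trans (eqmod_sym (val_sqpi_eqmod Ux)) _.
  by rewrite exy; apply: val_sqpi_eqmod.
by apply: val_inj; rewrite /= !restrict_inE //; apply: modrepr_eq.
Qed.

Definition sq_zero : Q := sqpi 0.
Definition sq_add (p q : Q) : Q := sqpi (val p + val q).
Definition sq_opp (q : Q) : Q := sqpi (- val q).
Definition sq_scale (r : R) (q : Q) : Q := sqpi (r *: val q).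

Local Ltac in_U := repeat first [ assumption | apply: U_val | apply: (submodD U_sub)
  | apply: (submodZ U_sub) | apply: (submodN U_sub) | apply: (submod0 U_sub) ].
Local Ltac in_W := repeat first [ apply: eqmod_refl | apply: eqmodD | apply: eqmodZ
  | apply: eqmodN | apply: val_sqpi_eqmod; in_U ].

Lemma sq_addA : associative sq_add.
Proof.
move=> p q r; apply/sqpi_eq; in_U.
apply: (@eqmod_trans (val p + (val q + val r))); first by in_W.
by rewrite addrA; apply: eqmod_sym; in_W.
Qed.

Lemma sq_addC : commutative sq_add.
Proof. by move=> p q; rewrite /sq_add addrC. Qed.

Lemma sq_add0 : left_id sq_zero sq_add.
Proof.
move=> q; rewrite -[RHS]sqpi_val; apply/sqpi_eq; in_U.
by apply: (@eqmod_trans (0 + val q)); first in_W; rewrite add0r; apply: eqmod_refl.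
Qed.

Lemma sq_addN : left_inverse sq_zero sq_opp sq_add.
Proof.
move=> q; apply/sqpi_eq; in_U.
by apply: (@eqmod_trans (- val q + val q)); first in_W; rewrite addNr; apply: eqmod_refl.
Qed.

HB.instance Definition _ := GRing.isZmodule.Build Q sq_addA sq_addC sq_add0 sq_addN.

Lemma sq_scaleA r s q : sq_scale r (sq_scale s q) = sq_scale (r * s) q.
Proof.
apply/sqpi_eq; in_U.
by apply: (@eqmod_trans (r *: (s *: val q))); first in_W; rewrite scalerA; apply: eqmod_refl.
Qed.

Lemma sq_scale1 : left_id 1 sq_scale.
Proof. by move=> q; rewrite /sq_scale scale1r sqpi_val. Qed.

Lemma sq_scaleDr : right_distributive sq_scale +%R.
Proof.
move=> r p q; apply/sqpi_eq; in_U.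
apply: (@eqmod_trans (r *: (val p + val q))); first by in_W.
by rewrite scalerDr; apply: eqmod_sym; in_W.
Qed.

Lemma sq_scaleDl q : {morph sq_scale^~ q : r s / r + s}.
Proof. by move=> r s; apply/sqpi_eq; in_U; rewrite scalerDl; apply: eqmod_sym; in_W. Qed.

HB.instance Definition _ :=
  GRing.Zmodule_isLmodule.Build R Q sq_scaleA sq_scale1 sq_scaleDr sq_scaleDl.

Lemma sqpi_lin r x y : U x -> U y -> sqpi (r *: x + y) = r *: sqpi x + sqpi y.
Proof.
move=> Ux Uy; apply/sqpi_eq; in_U.
by apply: eqmod_sym; apply: (@eqmod_trans (r *: val (sqpi x) + y)); in_W.
Qed.

Lemma sqpiZ r x : U x -> sqpi (r *: x) = r *: sqpi x.
Proof.
by move=> Ux; have := sqpi_lin r Ux (submod0 U_sub); rewrite !addr0.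
Qed.

Lemma sqpi_eq0 x : U x -> sqpi x = 0 <-> W x.
Proof. by move=> Ux; rewrite (sqpi_eq Ux (submod0 U_sub)) subr0. Qed.

Lemma subquot_eq0 (q : Q) : q = 0 <-> W (val q).
Proof. by rewrite -{1}(sqpi_val q); apply/sqpi_eq0/U_val. Qed.

Definition linear_on (T : lmodType R) (f : V -> T) : Prop :=
  forall r x y, U x -> U y -> f (r *: x + y) = r *: f x + f y.

Lemma linear_on_subquot (T : lmodType R) (f : V -> T) :
  linear_on f -> (forall w, W w -> f w = 0) -> linear (fun q : Q => f (val q)).
Proof.
move=> f_lin fW r p q.
have f0 : f 0 = 0 by apply: fW; apply: submod0.
have fsqpi x : U x -> f (val (sqpi x)) = f x.
  move=> Ux; have Wd := val_sqpi_eqmod Ux.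
  have := f_lin 1 _ _ (WU Wd) Ux; rewrite !scale1r subrK => ->.
  by rewrite fW // add0r.
have fD x y : U x -> U y -> f (x + y) = f x + f y.
  by move=> Ux Uy; have := f_lin 1 _ _ Ux Uy; rewrite !scale1r.
have fZ s x : U x -> f (s *: x) = s *: f x.
  by move=> Ux; have := f_lin s _ _ Ux (submod0 U_sub); rewrite !addr0 f0 addr0.
rewrite fsqpi; last by in_U.
rewrite fD; [|in_U|in_U].
by rewrite fsqpi ?fZ //; in_U.
Qed.

End Subquotient.

Section SubquotientMap.
Variables (R : comPzRingType) (V : lmodType R) (U1 W1 U2 W2 : V -> Prop).
Variables (UW1 : subquot_spec U1 W1) (UW2 : subquot_spec U2 W2).
Hypotheses (U12 : forall x, U1 x -> U2 x) (W12 : forall x, W1 x -> W2 x).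

Definition subquot_map of (forall x, U1 x -> U2 x) & (forall x, W1 x -> W2 x) :=
  fun q : subquot UW1 => sqpi UW2 (val q).

Local Notation qmap := (subquot_map U12 W12).

Lemma subquot_map_linear : linear qmap.
Proof.
apply: (linear_on_subquot (f := sqpi UW2)).
  by move=> r x y /U12 Ux /U12 Uy; apply: sqpi_lin.
have [_ _ WU1] := UW1.
by move=> w Ww; apply/sqpi_eq0; [apply/U12/WU1 | apply: W12].
Qed.

HB.instance Definition _ :=
  GRing.isLinear.Build R (subquot UW1) (subquot UW2) _ qmap subquot_map_linear.

Lemma subquot_map_eq0 q : qmap q = 0 <-> W2 (val q).
Proof. exact: sqpi_eq0 (U12 (U_val q)). Qed.

End SubquotientMap.

Section IdealSpan.
Variable R : comPzRingType.

Fixpoint ideal_span (s : seq R) (x : R) : Prop :=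
  if s is g :: s' then exists r y, ideal_span s' y /\ x = r * g + y else x = 0.

Lemma ideal_span_ideal s : is_ideal (ideal_span s).
Proof.
elim: s => [|g s [span0 spanD spanM]] /=.
  by split=> [//|x y -> ->|r x ->]; rewrite ?addr0 ?mulr0.
split.
- by exists 0, 0; rewrite mul0r addr0.
- move=> _ _ [r [u [su ->]]] [r' [u' [su' ->]]].
  by exists (r + r'), (u + u'); rewrite mulrDl addrACA; split; first exact: spanD.
- move=> c _ [r [u [su ->]]].
  by exists (c * r), (c * u); rewrite mulrDr mulrA; split; first exact: spanM.
Qed.

Lemma ideal_span_cons g s x : ideal_span s x -> ideal_span (g :: s) x.
Proof. by move=> sx; exists 0, x; rewrite mul0r add0r. Qed.

Lemma ideal_span_head g s : ideal_span (g :: s) g.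
Proof. by exists 1, 0; rewrite mul1r addr0; split; case: (ideal_span_ideal s). Qed.

Lemma ideal_span_annihilates (V : lmodType R) (m : V) s x :
  (forall g, g \in s -> g *: m = 0) -> ideal_span s x -> x *: m = 0.
Proof.
elim: s x => [|g s IH] x /= sm; first by move->; rewrite scale0r.
move=> [r [y [sy ->]]]; rewrite scalerDl -scalerA sm ?mem_head // scaler0 add0r.
by apply: IH sy => h hs; apply: sm; rewrite in_cons hs orbT.
Qed.

Lemma noetherian_ideal_finitely_generated (a : R -> Prop) :
  noetherian_ring R -> is_ideal a ->
  exists2 s, (forall g, g \in s -> a g) & (forall x, a x -> ideal_span s x).
Proof.
move=> noeth [a0 _ _].
have [next next_spec] : {next : seq R -> R & forall s,
    a (next s) /\ (ideal_span s (next s) -> forall x, a x -> ideal_span s x)}.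
  apply: (@choice _ _ (fun s x =>
    a x /\ (ideal_span s x -> forall y, a y -> ideal_span s y))) => s.
  have [span_a|] := pselect (forall x, a x -> ideal_span s x).
    by exists 0.
  by move=> /existsNP[x /not_implyP[ax Nsx]]; exists x.
pose xs n := iter n (fun s => next s :: s) [::].
have xs_a n g : g \in xs n -> a g.
  elim: n => //= n IH; rewrite in_cons => /orP[/eqP->|/IH //].
  exact: (next_spec _).1.
have [N stable] := noeth (fun n => ideal_span (xs n)) (fun n => ideal_span_ideal _)
  (fun n x => @ideal_span_cons (next (xs n)) (xs n) x).
exists (xs N); first exact: xs_a.
apply: (next_spec (xs N)).2.
exact: stable (leqnSn N) _ (ideal_span_head _ _).
Qed.

End IdealSpan.

Section ExtensionClass.
Variable R : comPzRingType.
Implicit Types (S T C : modclass R) (X Z : lmodType R).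

Lemma closed_sub_trivial S X Z : closed_sub S -> S X -> (forall z : Z, z = 0) -> S Z.
Proof.
move=> subS SX Z0; apply: (subS X Z \0) SX => z z' _.
by rewrite (Z0 z) (Z0 z').
Qed.

Lemma ext_class_left S T X : contains_zero T -> S X -> ext_class S T X.
Proof.
move=> [Z [Z0 TZ]] SX; exists X, Z, idfun, \0; split => //; split => // [n|m].
  by exists 0; rewrite (Z0 n); apply: Z0.
by split => [_|_ //]; exists m.
Qed.

Lemma ext_class_right S T X : contains_zero S -> T X -> ext_class S T X.
Proof.
move=> [Z [Z0 SZ]] TX; exists Z, X, \0, idfun; split => //; split => [z z' _|n|m].
- by rewrite (Z0 z) (Z0 z').
- by exists n.
- by split => [/= ->|[z <-]]; first exists 0.
Qed.

Lemma ext_class_in_closed S T C X : ext_closed C ->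
  (forall Y, S Y -> C Y) -> (forall Y, T Y -> C Y) -> ext_class S T X -> C X.
Proof.
move=> extC SC TC [L [N [f [g [fg SL TN]]]]].
by apply/extC; exists L, N, f, g; split; [| apply: SC | apply: TC].
Qed.

Lemma ext_class_swap S T X : serre S -> contains_zero T ->
  ext_closed (ext_class S T) -> ext_class T S X -> ext_class S T X.
Proof.
move=> [subS _ _] T0 extST TSX; apply: (ext_class_in_closed extST _ _ TSX) => Y.
  have [_ [N [_ [_ [_ _ SN]]]]] := TSX; have [Z [Z0 _]] := T0.
  by apply: ext_class_right; exists Z; split => //; apply: closed_sub_trivial SN Z0.
exact: ext_class_left.
Qed.

Definition inl_mod X Z (x : X) : (X * Z)%type := (x, 0).

Lemma inl_mod_linear X Z : linear (@inl_mod X Z).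
Proof. by move=> r x y; apply/eqP; rewrite xpair_eqE /= scaler0 addr0 !eqxx. Qed.

HB.instance Definition _ X Z :=
  GRing.isLinear.Build R X (X * Z)%type _ (@inl_mod X Z) (@inl_mod_linear X Z).

Lemma ext_closed_prod S X Z : ext_closed S -> S X -> S Z -> S (X * Z)%type.
Proof.
move=> extS SX SZ; apply/extS; exists X, Z, (@inl_mod X Z), snd; split => //; split.
- by move=> x y [].
- by move=> z; exists (0, z).
- by case=> x z; split => [/= ->|[x' [_ <-]]] //; exists x.
Qed.

(* [modpow X n] is the power X^(n+1). *)
Fixpoint modpow X (n : nat) : lmodType R :=
  if n is n'.+1 then (X * modpow X n')%type else X.

Lemma ext_closed_modpow S X n : ext_closed S -> S X -> S (modpow X n).
Proof. by move=> extS SX; elim: n => //= n; apply: ext_closed_prod. Qed.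

End ExtensionClass.

Section ColonQuotient.
Variables (R : comPzRingType) (a : R -> Prop) (M L : lmodType R) (j : {linear L -> M}).
Hypotheses (j_inj : injective j) (j_socle : forall l x, a x -> x *: j l = 0).

(* Identifying [L] with [jimg], [asocle] is [(0 :_M a)] and [colon] is [(L :_M a)]. *)
Definition jimg (m : M) : Prop := exists l, j l = m.
Definition asocle (m : M) : Prop := forall x, a x -> x *: m = 0.
Definition colon (m : M) : Prop := forall x, a x -> jimg (x *: m).

Lemma jimg_submod : submod jimg.
Proof.
split; first by exists 0; rewrite linear0.
by move=> r _ _ [l <-] [l' <-]; exists (r *: l + l'); rewrite linearP.
Qed.

Lemma asocle_submod : submod asocle.
Proof.
split=> [x _|r m m' sm sm' x ax]; first by rewrite scaler0.
by rewrite scalerDr scalerA mulrC -scalerA sm // sm' // scaler0 addr0.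
Qed.

Lemma colon_submod : submod colon.
Proof.
split=> [x _|r m m' cm cm' x ax]; first by rewrite scaler0; apply: submod0 jimg_submod.
rewrite scalerDr scalerA mulrC -scalerA.
by apply: jimg_submod.2; [apply: cm | apply: cm'].
Qed.

Lemma jimg_colon m : jimg m -> colon m.
Proof. by move=> [l <-] x _; exists (x *: l); rewrite linearZ. Qed.

Lemma jimg_asocle m : jimg m -> asocle m.
Proof. by move=> [l <-] x; apply: j_socle. Qed.

Lemma asocle_colon m : asocle m -> colon m.
Proof. by move=> sm x ax; rewrite sm //; apply: submod0 jimg_submod. Qed.

Lemma quot_spec : subquot_spec (fun _ : M => True) jimg.
Proof. by split=> //; apply: jimg_submod. Qed.

Lemma colon_spec : subquot_spec colon jimg.
Proof.
by split; [exact: colon_submod | exact: jimg_submod | exact: jimg_colon].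
Qed.

Lemma colon_asocle_spec : subquot_spec colon asocle.
Proof. by split; [exact: colon_submod | exact: asocle_submod | exact: asocle_colon]. Qed.

Definition quot_map : M -> subquot quot_spec := sqpi quot_spec.

Lemma quot_map_linear : linear quot_map.
Proof. by move=> r x y; apply: sqpi_lin. Qed.

HB.instance Definition _ :=
  GRing.isLinear.Build R M (subquot quot_spec) _ quot_map quot_map_linear.

Lemma quot_short_exact : short_exact j quot_map.
Proof.
split=> // [q|m]; first by exists (val q); apply: sqpi_val.
exact: sqpi_eq0.
Qed.

Lemma quot_torsion : a_torsion a M -> a_torsion a (subquot quot_spec).
Proof.
move=> torM q; have [n annq] := torM (val q); exists n => s sa.
by rewrite -[q](sqpi_val quot_spec) -sqpiZ // annq.
Qed.

Definition socle_incl : subquot colon_spec -> subquot quot_spec :=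
  subquot_map (UW1 := colon_spec) quot_spec (fun _ _ => I) (fun _ => id).

Lemma socle_in_quot (S : modclass R) :
  S (subquot colon_spec) -> socle_in a S (subquot quot_spec).
Proof.
move=> SK; exists _, socle_incl; split => // [k k' /eqP|q].
  rewrite -subr_eq0 -linearB => /eqP /subquot_map_eq0 /= Wk.
  by apply/eqP; rewrite -subr_eq0; apply/eqP/subquot_eq0.
split=> [[k <-] x ax|annq].
  rewrite -linearZ; have -> : x *: k = 0.
    rewrite -[k](sqpi_val colon_spec) -sqpiZ; last exact: U_val.
    by apply/sqpi_eq0; [apply: (submodZ colon_submod) |]; apply: (U_val k).
  exact: linear0.
have colq : colon (val q).
  move=> x ax; apply/(sqpi_eq0 quot_spec I).
  by rewrite sqpiZ // sqpi_val; apply: annq.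
exists (sqpi colon_spec (val q)); rewrite -[RHS](sqpi_val quot_spec).
by apply/(sqpi_eq quot_spec) => //; apply: val_sqpi_eqmod colq.
Qed.

Definition jinv (m : M) : L := if pselect (jimg m) is left h then projT1 (cid h) else 0.

Lemma jinvK m : jimg m -> j (jinv m) = m.
Proof. by rewrite /jinv; case: pselect => // h _; apply: projT2 (cid h). Qed.

Lemma jinv0 : jinv 0 = 0.
Proof. by apply: j_inj; rewrite jinvK ?linear0 //; apply: submod0 jimg_submod. Qed.

Lemma jinv_lin r x y : jimg x -> jimg y -> jinv (r *: x + y) = r *: jinv x + jinv y.
Proof.
move=> jx jy; apply: j_inj; rewrite linearP !jinvK //.
exact: jimg_submod.2.
Qed.

Fixpoint colon_coord (s : seq R) (m : M) : modpow L (size s) :=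
  match s return modpow L (size s) with
  | [::] => 0
  | g :: s' => (jinv (g *: m), colon_coord s' m)
  end.

Lemma colon_coord_linear_on s : (forall g, g \in s -> a g) ->
  linear_on colon (colon_coord s).
Proof.
elim: s => [|g s IH] sa r x y cx cy /=; first by rewrite scaler0 addr0.
have ag : a g by apply: sa; rewrite mem_head.
rewrite IH // => [|h hs]; last by apply: sa; rewrite in_cons hs orbT.
by rewrite scalerDr !scalerA mulrC -scalerA jinv_lin //; [apply: cx | apply: cy].
Qed.

Lemma colon_coord_asocle s m : (forall g, g \in s -> a g) -> asocle m -> colon_coord s m = 0.
Proof.
move=> sa sm; elim: s sa => [//|g s IH] sa /=.
rewrite sm ?jinv0 ?IH // => [h hs|]; last by apply: sa; rewrite mem_head.
by apply: sa; rewrite in_cons hs orbT.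
Qed.

Lemma colon_coord_eq0 s m : colon m -> (forall g, g \in s -> a g) ->
  colon_coord s m = 0 -> forall g, g \in s -> g *: m = 0.
Proof.
move=> cm; elim: s => [//|g s IH] sa /= [pg0 s0] h.
have ag : a g by apply: sa; rewrite mem_head.
rewrite in_cons => /orP[/eqP ->|hs]; first by rewrite -(jinvK (cm g ag)) pg0 linear0.
by apply: IH => // h' hs'; apply: sa; rewrite in_cons hs' orbT.
Qed.

Section Generators.
Variables (gs : seq R) (gs_a : forall g, g \in gs -> a g).
Hypothesis a_gs : forall x, a x -> ideal_span gs x.

Definition colon_asocle_coord (y : subquot colon_asocle_spec) : modpow L (size gs) :=
  colon_coord gs (val y).

Lemma colon_asocle_coord_linear : linear colon_asocle_coord.
Proof.
apply: linear_on_subquot; first exact: colon_coord_linear_on.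
by move=> w; apply: colon_coord_asocle.
Qed.

HB.instance Definition _ := GRing.isLinear.Build R (subquot colon_asocle_spec)
  (modpow L (size gs)) _ colon_asocle_coord colon_asocle_coord_linear.

Lemma colon_asocle_coord_inj : injective colon_asocle_coord.
Proof.
move=> y y' eq_coord; apply/eqP; rewrite -subr_eq0; apply/eqP/subquot_eq0 => x ax.
apply: ideal_span_annihilates (a_gs ax); apply: colon_coord_eq0 => //; first exact: U_val.
by rewrite -/(colon_asocle_coord _) linearB /= eq_coord subrr.
Qed.

Lemma serre_colon_asocle (S : modclass R) :
  serre S -> S L -> S (subquot colon_asocle_spec).
Proof.
move=> [subS _ extS] SL; apply: (subS _ _ colon_asocle_coord colon_asocle_coord_inj).
exact: ext_closed_modpow.
Qed.

End Generators.

Section SocleExtension.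
Variables (Ns N : lmodType R) (i : {linear Ns -> M}).
Variables (f : {linear L -> Ns}) (g : {linear Ns -> N}).
Hypotheses (i_inj : injective i) (i_socle : forall m, (exists n, i n = m) <-> asocle m).
Hypotheses (jE : forall l, j l = i (f l)) (fg : short_exact f g).

Let g_surj n : exists m, g m = n. Proof. by case: fg. Qed.

Definition gsection (n : N) : Ns := projT1 (cid (g_surj n)).

Lemma gsectionK n : g (gsection n) = n. Proof. exact: projT2 (cid (g_surj n)). Qed.

Lemma colon_i m : colon (i m).
Proof. by apply/asocle_colon/i_socle; exists m. Qed.

Lemma jimg_i m : g m = 0 -> jimg (i m).
Proof. by case: fg => _ _ /[apply] -[l <-]; exists l. Qed.

Definition coker_to_colon (n : N) : subquot colon_spec :=
  sqpi colon_spec (i (gsection n)).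

Lemma socle_to_colon_linear : linear coker_to_colon.
Proof.
move=> r n n'; rewrite /coker_to_colon -sqpi_lin; [|exact: colon_i|exact: colon_i].
apply/sqpi_eq; [exact: colon_i | apply: colon_submod.2; exact: colon_i |].
by rewrite -!linearP -linearB; apply: jimg_i; rewrite linearB linearP /= !gsectionK subrr.
Qed.

HB.instance Definition _ :=
  GRing.isLinear.Build R N (subquot colon_spec) _ coker_to_colon socle_to_colon_linear.

Definition colon_proj :=
  subquot_map (UW1 := colon_spec) colon_asocle_spec (fun _ => id) jimg_asocle.

Lemma colon_short_exact : short_exact coker_to_colon colon_proj.
Proof.
split=> [n n'|y|k].
- move=> /(sqpi_eq _ (colon_i _) (colon_i _)); rewrite -linearB => -[l].
  rewrite jE => /i_inj fl; apply/eqP; rewrite -subr_eq0; apply/eqP.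
  rewrite -[n]gsectionK -[n']gsectionK -linearB -fl.
  by case: fg => _ _ /(_ (f l)) [_ ->]; last exists l.
- exists (sqpi colon_spec (val y)); rewrite -[RHS](sqpi_val colon_asocle_spec).
  apply/sqpi_eq; [by apply: U_val; exact: colon_spec | exact: U_val |].
  exact/jimg_asocle/(val_sqpi_eqmod colon_spec (U_val y)).
split=> [/subquot_map_eq0 /i_socle[s sk]|[n <-]]; last apply/subquot_map_eq0.
  exists (g s); rewrite -[RHS](sqpi_val colon_spec).
  apply/sqpi_eq; [exact: colon_i | exact: U_val |].
  by rewrite -sk -linearB; apply: jimg_i; rewrite linearB /= gsectionK subrr.
rewrite -[val _](subrK (i (gsection n))); apply: (submodD asocle_submod).
  exact/jimg_asocle/(val_sqpi_eqmod colon_spec (colon_i _)).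
by apply/i_socle; exists (gsection n).
Qed.

Lemma ext_class_colon (S T : modclass R) :
  T N -> S (subquot colon_asocle_spec) -> ext_class T S (subquot colon_spec).
Proof.
by move=> TN SY; exists N, _, coker_to_colon, colon_proj; split=> //; apply: colon_short_exact.
Qed.

End SocleExtension.

End ColonQuotient.

Theorem proposition3p3 (R : comPzRingType) (a : R -> Prop) (S1 S2 : modclass R) :
  noetherian_ring R -> is_ideal a ->
  serre S1 -> iso_closed S2 -> contains_zero S2 ->
  ext_closed (ext_class S1 S2) ->
  closed_quot (Ca_class a (ext_class S2 S1)) ->
  (forall M, Ca_class a (ext_class S2 S1) M -> Ca_class a (ext_class S1 S2) M) /\
  (satisfies_Ca a (ext_class S2 S1) -> satisfies_Ca a (ext_class S1 S2)).
Proof.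
move=> noeth ideal_a serreS1 _ S2_0 extS12 quotCa.
suff Ca21_Ca12 M : Ca_class a (ext_class S2 S1) M -> Ca_class a (ext_class S1 S2) M.
  by split=> // Ca21 M; apply/Ca21_Ca12/Ca21.
move=> CaM torM [Ns [i [i_inj i_socle [L [N [f [g [fg S1L S2N]]]]]]]].
have [gs gs_a a_gs] := noetherian_ideal_finitely_generated noeth ideal_a.
pose j : {linear L -> M} := i \o f.
have j_inj : injective j by case: fg => f_inj _ _ l l' /i_inj /f_inj.
have j_socle l x : a x -> x *: j l = 0 by apply: (i_socle (j l)).1; exists (f l).
have [_ quot_surj _] := quot_short_exact j_inj.
apply: (ext_class_in_closed extS12 (fun X => ext_class_left S2_0) (fun X => id)).
exists L, _, j, (quot_map j); split=> //; first exact: quot_short_exact.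
apply: (ext_class_swap serreS1 S2_0 extS12).
apply: (quotCa _ _ _ quot_surj CaM); first exact: quot_torsion.
apply: socle_in_quot; apply: (ext_class_colon j_socle i_inj i_socle _ fg S2N) => //.
exact: (serre_colon_asocle j_inj gs_a a_gs serreS1 S1L).
Qed.
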